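(* Let $\mathcal{C}$ be a finite direct category of composition length $N\ge1$. Then $\mathsf{E}^n(\mathcal{C},k)=\mathsf{G}^n(\mathcal{C},k)=0$ for all $n>N$. Moreover, the map $\mathsf{G}^n(\mathcal{C},k)\to H^n(|\mathcal{C}|;\mathbb{Z})$ induced by the cochain map sending $[M]\in\mathrm{Gr}(k\mathcal{G}^{\mathcal{C}}_n)$ to the normalized cochain $\sigma\mapsto\dim_kM(\sigma)$ on non-degenerate $n$-simplices $\sigma$ of the nerve is an isomorphism for all $n\ge\lfloor N/2\rfloor+1$ and an epimorphism for $1\le n\le\lfloor N/2\rfloor$.
   Context: A small category is direct if it has no infinite chain of composable non-identity morphisms and no cycle of non-identity morphisms of positive length. A morphism is irreducible if it is not an identity and in any factorization one factor is an identity; the composition length is the maximal length of a chain of composable irreducible morphisms. Fix a field $k$; modules are functors to finite-dimensional $k$-vector spaces, $\mathrm{Gr}$ is the split Grothendieck group, $F^*M=M\circ F$. For $n\ge0$, $\widetilde{\mathcal{E}}^{\mathcal{C}}_n=\mathcal{C}^{[n]}$ has objects strings $[u_1|\cdots|u_n]$ = $x_0\xrightarrow{u_1}\cdots\xrightarrow{u_n}x_n$ and morphisms commutative ladders $(f_0,\dots,f_n)$; faces $\partial_i$ delete $x_i$ (composing $u_{i+1}u_i$ for $0<i<n$). $\widetilde{\mathcal{G}}^{\mathcal{C}}_n$ has the same objects and as morphisms the identities and, for each $w:x_n\to y_0$, the ladder $f_i=v_i\cdots v_1\,w\,u_n\cdots u_{i+1}$. A string is non-degenerate if no $u_i$ is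 an identity. $\mathcal{E}^{\mathcal{C}}_n$, $\mathcal{G}^{\mathcal{C}}_n$ are the full subcategories of $\widetilde{\mathcal{E}}^{\mathcal{C}}_n$, $\widetilde{\mathcal{G}}^{\mathcal{C}}_n$ on non-degenerate strings ($\mathcal{C}$ itself for $n=0$); with the restricted faces they are semi-simplicial objects, and $\mathsf{E}^*(\mathcal{C},k)$, $\mathsf{G}^*(\mathcal{C},k)$ denote the cohomology of $(\mathrm{Gr}(k\mathcal{E}^{\mathcal{C}}_\bullet),d)$, $(\mathrm{Gr}(k\mathcal{G}^{\mathcal{C}}_\bullet),d)$ with $d^n=\sum_{i=0}^{n+1}(-1)^i\partial_i^*$. *)

From HB Require Import structures.
From mathcomp Require Import all_boot all_order all_algebra.
Set Implicit Arguments. Unset Strict Implicit. Unset Printing Implicit Defensive.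
Import Order.TTheory GRing.Theory Num.Theory.

(* Finite (small) categories, presented with a single type of         *)
(* morphisms.  [comp f g] is the composite "f then g", i.e. g o f; it  *)
(* is meaningful when [cod f = dom g].                                  *)
Record FinCat := FinCatMk {
  Obj : finType;
  Mor : finType;
  dom : Mor -> Obj;
  cod : Mor -> Obj;
  idm : Obj -> Mor;
  comp : Mor -> Mor -> Mor;
  dom_idm : forall a, dom (idm a) = a;
  cod_idm : forall a, cod (idm a) = a;
  dom_comp : forall f g, cod f = dom g -> dom (comp f g) = dom f;
  cod_comp : forall f g, cod f = dom g -> cod (comp f g) = cod g;
  comp_idl : forall f, comp (idm (dom f)) f = f;
  comp_idr : forall f, comp f (idm (cod f)) = f;
  comp_assoc : forall f g h, cod f = dom g -> cod g = dom h ->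
     comp (comp f g) h = comp f (comp g h)
}.
Arguments dom {f0} _.
Arguments cod {f0} _.
Arguments idm {f0} _.
Arguments comp {f0} _ _.

Section Cat.
Variable C : FinCat.

Definition isid (f : Mor C) : bool := [exists a : Obj C, f == idm a].

Definition direct : Prop :=
  (~ exists s : nat -> Mor C,
       forall i, ~~ isid (s i) /\ cod (s i) = dom (s i.+1)) /\
  (~ exists (m : nat) (s : nat -> Mor C), 0 < m /\
       (forall i, i < m -> ~~ isid (s i)) /\
       (forall i, i < m -> cod (s i) = dom (s (i.+1 %% m)))).

Definition irreducible (f : Mor C) : Prop :=
  ~~ isid f /\
  forall g h : Mor C, cod g = dom h -> comp g h = f -> isid g \/ isid h.

Definition irr_chain (m : nat) (s : nat -> Mor C) : Prop :=
  (forall i, i < m -> irreducible (s i)) /\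
  (forall i, i.+1 < m -> cod (s i) = dom (s i.+1)).

Definition comp_length (N : nat) : Prop :=
  (exists s, irr_chain N s) /\ (forall m s, irr_chain m s -> m <= N).

(* Strings [u_1|...|u_n] = x_0 -> ... -> x_n, stored as the list of    *)
(* objects [x_0;...;x_n] and the list of morphisms [u_1;...;u_n].      *)
Definition str := (seq (Obj C) * seq (Mor C))%type.

(* a non-degenerate string of length n (= objects of E_n, G_n, and   *)
(* the non-degenerate n-simplices of the nerve of C)                  *)
Definition ndstr (n : nat) (s : str) : bool :=
  [&& size s.1 == n.+1, size s.2 == n,
      map dom s.2 == take n s.1, map cod s.2 == behead s.1
    & all (fun u => ~~ isid u) s.2].

Definition sdel {T} (i : nat) (l : seq T) : seq T := take i l ++ drop i.+1 l.

Fixpoint mergeAt (j : nat) (us : seq (Mor C)) : seq (Mor C) :=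
  match us with
  | u :: t =>
      match t with
      | v :: r => if j is j'.+1 then u :: mergeAt j' t else comp u v :: r
      | [::] => us
      end
  | [::] => [::]
  end.

(* the face d_i deleting x_i (composing u_{i+1} u_i for 0 < i < n) *)
Definition sface (i : nat) (s : str) : str :=
  (sdel i s.1,
   if i == 0 then behead s.2
   else if i == size s.2 then take (size s.2).-1 s.2
   else mergeAt i.-1 s.2).

(* ladders (f_0,...,f_n) : source string, target string, components *)
Definition lad := ((str * str) * seq (Mor C))%type.

Definition lface (i : nat) (l : lad) : lad :=
  ((sface i l.1.1, sface i l.1.2), sdel i l.2).

Definition lid (s : str) : lad := ((s, s), map idm s.1).

Definition lcomp (l1 l2 : lad) : lad :=
  ((l1.1.1, l2.1.2), [seq comp p.1 p.2 | p <- zip l1.2 l2.2]).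

(* morphisms of E_n: commutative ladders between non-degenerate strings *)
Definition ladE (n : nat) (l : lad) : bool :=
  let: ((s, t), fs) := l in
  [&& ndstr n s, ndstr n t, size fs == n.+1,
      map dom fs == s.1, map cod fs == t.1 &
      [seq comp p.1 p.2 | p <- zip s.2 (behead fs)] ==
      [seq comp p.1 p.2 | p <- zip (take n fs) t.2]].

Definition compL (d : Mor C) (L : seq (Mor C)) : Mor C :=
  if L is a :: r then foldl comp a r else d.

(* the ladder determined by w : x_n -> y_0:
   f_i = v_i ... v_1 w u_n ... u_{i+1} *)
Definition wlad (n : nat) (s t : str) (w : Mor C) : seq (Mor C) :=
  [seq compL w (drop i s.2 ++ w :: take i t.2) | i <- iota 0 n.+1].

(* morphisms of G_n: identities and the ladders determined by some w *)
Definition ladG (n : nat) (l : lad) : bool :=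
  let: ((s, t), fs) := l in
  ladE n l &&
  ((s == t) && (fs == map idm s.1) ||
   [exists w : Mor C, [&& last (dom w) s.1 == dom w,
                          head (cod w) t.1 == cod w &
                          fs == wlad n s t w]]).

Inductive kind := KE | KG.

Definition vlad (K : kind) (n : nat) (l : lad) : bool :=
  if K is KE then ladE n l else ladG n l.

(* Modules: functors to finite-dimensional k-vector spaces, given by a *)
(* dimension for every object and a matrix for every morphism (acting  *)
(* on row vectors, so M(g o f) = M(f) *m M(g)).                        *)
Variable k : fieldType.

Record rmod := RMod {
  mdim : str -> nat;
  mact : forall a b : str, lad -> 'M[k]_(mdim a, mdim b)
}.

Definition isMod (K : kind) (n : nat) (M : rmod) : Prop :=
  (forall a, ndstr n a -> mact M a a (lid a) = (1%:M)%R) /\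
  (forall a b c (l1 l2 : lad), vlad K n l1 -> vlad K n l2 ->
     l1.1 = (a, b) -> l2.1 = (b, c) ->
     mact M a c (lcomp l1 l2) = (mact M a b l1 *m mact M b c l2)%R).

Definition modIso (K : kind) (n : nat) (M N : rmod) : Prop :=
  exists (phi : forall a, 'M[k]_(mdim M a, mdim N a))
         (psi : forall a, 'M[k]_(mdim N a, mdim M a)),
    (forall a, ndstr n a -> (phi a *m psi a = 1%:M)%R /\ (psi a *m phi a = 1%:M)%R) /\
    (forall a b l, vlad K n l -> l.1 = (a, b) ->
       (mact M a b l *m phi b = phi a *m mact N a b l)%R).

Definition zmod : rmod := @RMod (fun _ => 0%N) (fun _ _ _ => 0%R).

Definition dsum (M N : rmod) : rmod :=
  @RMod (fun a => (mdim M a + mdim N a)%N)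
        (fun a b l => block_mx (mact M a b l) 0%R 0%R (mact N a b l)).

Definition bigdsum (Ms : seq rmod) : rmod := foldr dsum zmod Ms.

Definition pb (i : nat) (M : rmod) : rmod :=
  @RMod (fun s => mdim M (sface i s))
        (fun a b l => mact M (sface i a) (sface i b) (lface i l)).

(* Split Grothendieck group Gr(k D_n) as the group completion of the   *)
(* monoid of iso classes under direct sum: an element is a formal      *)
(* difference [P] - [Q], and [P]-[Q] = [P']-[Q'] iff                   *)
(* P + Q' + X ~= P' + Q + X for some module X.                         *)
Definition grel := (rmod * rmod)%type.

Definition grValid (K : kind) (n : nat) (x : grel) : Prop :=
  isMod K n x.1 /\ isMod K n x.2.

Definition grEq (K : kind) (n : nat) (x y : grel) : Prop :=
  exists X, isMod K n X /\
    modIso K n (dsum (dsum x.1 y.2) X) (dsum (dsum y.1 x.2) X).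

Definition gr0 : grel := (zmod, zmod).

(* d^n = sum_{i=0}^{n+1} (-1)^i d_i^* : Gr(k D_n) -> Gr(k D_{n+1}) *)
Definition dGr (n : nat) (x : grel) : grel :=
  let ev := [seq i <- iota 0 n.+2 | ~~ odd i] in
  let od := [seq i <- iota 0 n.+2 | odd i] in
  (bigdsum ([seq pb i x.1 | i <- ev] ++ [seq pb i x.2 | i <- od]),
   bigdsum ([seq pb i x.1 | i <- od] ++ [seq pb i x.2 | i <- ev])).

Definition grCocycle (K : kind) (n : nat) (x : grel) : Prop :=
  grEq K n.+1 (dGr n x) gr0.

Definition grCobound (K : kind) (n : nat) (x : grel) : Prop :=
  if n is n'.+1 then exists y, grValid K n' y /\ grEq K n (dGr n' y) x
  else grEq K 0 x gr0.

Definition grVanish (K : kind) (n : nat) : Prop :=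
  forall x, grValid K n x -> grCocycle K n x -> grCobound K n x.

(* Normalized integral cochains of the nerve of C (computing           *)
(* H^*(|C|; Z)): functions on non-degenerate n-simplices.               *)
Definition cochain := str -> int.

Definition cdelta (n : nat) (phi : cochain) : cochain :=
  fun s => (\sum_(i < n.+2)
     (-1) ^+ i * (if ndstr n (sface i s) then phi (sface i s) else 0))%R.

Definition cEq (n : nat) (phi psi : cochain) : Prop :=
  forall s, ndstr n s -> phi s = psi s.

Definition cCocycle (n : nat) (phi : cochain) : Prop :=
  cEq n.+1 (cdelta n phi) (fun _ => 0%R).

Definition cCobound (n : nat) (phi : cochain) : Prop :=
  if n is n'.+1 then exists psi, cEq n (cdelta n' psi) phi
  else cEq 0 phi (fun _ => 0%R).

Definition chi (x : grel) : cochain :=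
  fun s => ((mdim x.1 s)%:Z - (mdim x.2 s)%:Z)%R.

(* induced map G^n(C,k) -> H^n(|C|;Z) is surjective / injective *)
Definition chiEpi (n : nat) : Prop :=
  forall phi, cCocycle n phi ->
    exists x, grValid KG n x /\ grCocycle KG n x /\
              cCobound n (fun s => (phi s - chi x s)%R).

Definition chiMono (n : nat) : Prop :=
  forall x, grValid KG n x -> grCocycle KG n x ->
    cCobound n (chi x) -> grCobound KG n x.

End Cat.

(** Every non-degenerate string of length n is a path of n non-identity
    morphisms, and in a direct category of composition length N such a path
    has at most N edges (refine reducible morphisms into irreducible ones;
    directness makes the refinement terminate).  Hence there are no strings of
    length n > N and the cohomology vanishes there.  A non-identity morphism
    of G_n, determined by w, yields the path u_1 ... u_n w v_1 ... v_n with at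
    least 2n non-identity edges, so for 2n > N the category G_n is discrete
    and every module is a sum of simples.  In general, directness still
    forbids non-trivial cycles in G_n and faces of a non-identity morphism
    have distinct endpoints, so "diagonal" modules (identity on
    endomorphisms, zero elsewhere) are modules, are stable under pullback
    along faces and direct sums, and are classified by their dimensions.
    The differential of the pair of diagonal modules built from the positive
    and negative parts of a cochain thus realises its coboundary, which gives
    surjectivity in every degree n >= 1 and injectivity when G_n is
    discrete. *)
From Pilot Require Import Defs.
From mathcomp Require Import all_boot all_order all_algebra.
From mathcomp Require Import zify.
From Stdlib Require Import Classical.
Set Implicit Arguments. Unset Strict Implicit. Unset Printing Implicit Defensive.
Import Order.TTheory GRing.Theory Num.Theory.

Lemma has_all_size (T : Type) (p : pred T) (s : seq T) :
  all p s -> 0 < size s -> has p s.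
Proof. by case: s => //= a s /andP [->]. Qed.

Section Paths.
Variable C : FinCat.
Implicit Types (x y z : Obj C) (f : Mor C) (L : seq (Mor C)).

Fixpoint is_path x L y : bool :=
  if L is f :: r then (dom f == x) && is_path (cod f) r y else x == y.

Definition path_objs x L := x :: map cod L.

Definition nonid f := ~~ isid f.

Lemma isid_dom_cod f : isid f -> dom f = cod f.
Proof. by case/existsP=> a /eqP->; rewrite dom_idm cod_idm. Qed.

Lemma is_path_cat x y z L1 L2 :
  is_path x L1 y -> is_path y L2 z -> is_path x (L1 ++ L2) z.
Proof.
elim: L1 x => [|f r IH] x /=; first by move/eqP->.
by case/andP=> -> /IH H /H ->.
Qed.

Lemma is_path_catP x z L1 L2 : is_path x (L1 ++ L2) z ->
  is_path x L1 (last x (map cod L1)) /\ is_path (last x (map cod L1)) L2 z.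
Proof.
elim: L1 x => [|f r IH] x /=; first by rewrite eqxx.
by case/andP=> -> /IH [-> ->].
Qed.

Lemma is_path_last x y L : is_path x L y -> y = last x (map cod L).
Proof. by elim: L x => [|f r IH] x /=; [move/eqP | case/andP=> _ /IH]. Qed.

Lemma is_path_filter_nonid x y L : is_path x L y -> is_path x (filter nonid L) y.
Proof.
elim: L x => [|f r IH] x //=; case/andP=> /eqP Hd Hr.
case: ifP => Hf /=; first by rewrite Hd eqxx IH.
by move/negbFE/isid_dom_cod: Hf => Hdc; rewrite -Hd Hdc; apply: IH.
Qed.

Lemma nth_path_objs_default x x' L j : j <= size L ->
  nth x' (path_objs x L) j = nth x (path_objs x L) j.
Proof. by move=> Hj; apply: set_nth_default; rewrite /= size_map ltnS. Qed.

Lemma is_path_take x y L j : is_path x L y -> j <= size L ->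
  is_path x (take j L) (nth x (path_objs x L) j).
Proof.
elim: L x j => [|f r IH] x [|j] //=; case/andP=> /eqP Hd Hr Hj.
rewrite Hd eqxx /=; have := IH _ j Hr Hj.
by rewrite /path_objs /= (set_nth_default (cod f)) //= size_map ltnS.
Qed.

Lemma is_path_drop x y L j : is_path x L y -> j <= size L ->
  is_path (nth x (path_objs x L) j) (drop j L) y.
Proof.
elim: L x j => [|f r IH] x [|j] Hc Hj //.
move: Hc => /= /andP [_ Hr]; have := IH _ j Hr Hj.
by rewrite /path_objs /= (set_nth_default (cod f)) //= size_map ltnS.
Qed.

Lemma is_path_nth x y L d i : is_path x L y -> i < size L ->
  dom (nth d L i) = nth x (path_objs x L) i /\
  cod (nth d L i) = nth x (path_objs x L) i.+1.
Proof.
elim: L x i => [|f r IH] x i //=; case/andP=> /eqP Hd Hr.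
case: i => [|i] /= Hi; first by rewrite Hd; case: r {IH Hr Hi}.
have [-> ->] := IH _ _ Hr Hi.
by rewrite /path_objs /= !(set_nth_default (cod f) x) //= size_map // ltnW.
Qed.

Lemma nth_path_objs_size x L :
  nth x (path_objs x L) (size L) = last x (map cod L).
Proof. by rewrite -(size_map cod) -[size _]/((size (path_objs x L)).-1) nth_last. Qed.

Lemma is_path_of_maps x L :
  map dom L = take (size L) (path_objs x L) -> is_path x L (last x (map cod L)).
Proof.
elim: L x => [|f r IH] x /=; first by rewrite eqxx.
by case=> -> H; rewrite eqxx /=; apply: IH.
Qed.

Lemma ndstr_path n (s : str C) : ndstr n s ->
  exists x, [/\ s.1 = path_objs x s.2, is_path x s.2 (last x (map cod s.2)),
               size s.2 = n & all nonid s.2].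
Proof.
case: s => [[|x xs] L] /and5P [/= /eqP H1 /eqP H2 /eqP H3 /eqP H4 H5] //.
exists x; rewrite /path_objs -H4; split=> //.
by apply: is_path_of_maps; rewrite /path_objs H4 H2.
Qed.

End Paths.

Section Direct.
Variable C : FinCat.
Hypothesis C_direct : direct C.
Implicit Types (x y z : Obj C) (f : Mor C) (L : seq (Mor C)).

Lemma direct_cycle_isid x L : is_path x L x -> all (@isid C) L.
Proof.
case: C_direct => _ Hcyc HL; apply/negPn/negP; rewrite -has_predC => Hh.
have {}HL := is_path_filter_nonid HL; set L' := filter _ L in HL.
have Hs : 0 < size L' by rewrite size_filter -has_count.
apply: Hcyc; exists (size L'), (nth (idm x) L'); split=> //; split.
  by move=> i /(mem_nth (idm x)); rewrite mem_filter => /andP [].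
move=> i Hi; have [_ ->] := is_path_nth (idm x) HL Hi.
case: (ltnP i.+1 (size L')) => Hi1.
  by rewrite modn_small //; have [-> _] := is_path_nth (idm x) HL Hi1.
have -> : i.+1 = size L' by apply/eqP; rewrite eqn_leq Hi Hi1.
rewrite modnn nth_path_objs_size -(is_path_last HL).
by have [-> _] := is_path_nth (idm x) HL Hs.
Qed.

Lemma direct_nonid_cycle x L : is_path x L x -> ~~ has (@nonid C) L.
Proof. by move/direct_cycle_isid/allP=> H; apply/hasPn=> f /H; rewrite /nonid negbK. Qed.

(* A repeated object on the path would cut out a cycle of non-identities. *)
Lemma nonid_path_size_lt_card x y L :
  is_path x L y -> all (@nonid C) L -> size L < #|Obj C|.
Proof.
move=> HL Ha; case: (boolP (uniq (path_objs x L))) => Hu.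
  by have := max_card (mem (path_objs x L)); rewrite (card_uniqP Hu) /= size_map.
case/(uniqPn x): Hu => i [j [Hij Hj Heq]]; rewrite /= size_map ltnS in Hj.
have Hi : i <= size (take j L) by rewrite size_take; case: ifP => _; lia.
have := is_path_drop (is_path_take HL Hj) Hi.
have -> : nth x (path_objs x (take j L)) i = nth x (path_objs x L) i.
  rewrite /path_objs map_take -[x :: take j _]/(take j.+1 (x :: map cod L)).
  by rewrite nth_take // ltnS ltnW.
rewrite Heq => /direct_nonid_cycle /negP; case; apply: has_all_size.
  by apply/allP=> f /mem_drop /mem_take /(allP Ha).
by rewrite size_drop size_take; case: ifP => _; lia.
Qed.

Lemma reducible_split f : nonid f -> ~ irreducible f ->
  exists g h, [/\ cod g = dom h, Defs.comp g h = f, nonid g & nonid h].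
Proof.
move=> Hf Hir; apply: NNPP => Hn; apply: Hir; split=> // g h Hgh Ef.
case: (boolP (isid g)) => Hg; first by left.
case: (boolP (isid h)) => Hh; first by right.
by case: Hn; exists g, h.
Qed.

Lemma irr_path_chain x y L : is_path x L y ->
  (forall f, f \in L -> irreducible f) -> irr_chain (size L) (nth (idm x) L).
Proof.
move=> HL Hirr; split=> [i Hi|i Hi]; first by apply/Hirr/mem_nth.
have [_ ->] := is_path_nth (idm x) HL (ltnW Hi).
by have [-> _] := is_path_nth (idm x) HL Hi.
Qed.

Lemma nonid_path_refine x y L : is_path x L y -> all (@nonid C) L ->
  ~ (forall f, f \in L -> irreducible f) ->
  exists L', [/\ is_path x L' y, all (@nonid C) L' & size L < size L'].
Proof.
move=> HL Ha /not_all_ex_not [f Hf]; have [Hfl Hfi] := imply_to_and _ _ Hf.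
have [g [h [Hgh Ef Hg Hh]]] := reducible_split (allP Ha _ Hfl) Hfi.
move: HL Ha; case/splitPr: Hfl => L1 L2 /is_path_catP [HL1 /= /andP [/eqP Hdf HL2]] Ha.
exists (L1 ++ g :: h :: L2); split.
- apply: (is_path_cat HL1) => /=.
  by rewrite -Hdf -Ef (dom_comp Hgh) Hgh -(cod_comp Hgh) Ef !eqxx.
- by move: Ha; rewrite !all_cat /= Hg Hh => /and3P [-> _ ->].
- by rewrite !size_cat /=; lia.
Qed.

Variable N : nat.
Hypothesis C_length : comp_length C N.

(* Refining terminates: a non-identity path is shorter than #|Obj C|. *)
Lemma nonid_path_size_le_length x y L :
  is_path x L y -> all (@nonid C) L -> size L <= N.
Proof.
case: C_length => _ HN.
move: {2}(#|Obj C| - size L) (leqnn (#|Obj C| - size L)) => m.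
elim: m L => [|m IH] L Hm HL Ha.
  by have := nonid_path_size_lt_card HL Ha; lia.
case: (classic (forall f, f \in L -> irreducible f)) => Hirr.
  exact: HN (irr_path_chain HL Hirr).
have [L' [HL' Ha' Hs]] := nonid_path_refine HL Ha Hirr.
by apply: leq_trans (ltnW Hs) (IH L' _ HL' Ha'); lia.
Qed.

Lemma ndstr_le_length n (s : str C) : ndstr n s -> n <= N.
Proof.
by case/ndstr_path=> x [_ Hp <- Ha]; apply: nonid_path_size_le_length Hp Ha.
Qed.

End Direct.

Section GLadders.
Variable C : FinCat.
Hypothesis C_direct : direct C.
Implicit Types (n : nat) (l : lad C) (a b : str C) (w : Mor C).

Lemma ladE_ndstr n l : ladE n l -> ndstr n l.1.1 /\ ndstr n l.1.2.
Proof. by case: l => [[s t] fs] /and5P [-> -> _ _ _]. Qed.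

Lemma vlad_ladE K n l : vlad K n l -> ladE n l.
Proof. by case: K => //=; case: l => [[s t] fs] /andP []. Qed.

Lemma ladG_ndstr n l : ladG n l -> ndstr n l.1.1 /\ ndstr n l.1.2.
Proof. by move/(vlad_ladE (K := KG))/ladE_ndstr. Qed.

Lemma ladG_cases n l : ladG n l ->
  l = lid l.1.1 \/
  exists w, last (dom w) l.1.1.1 = dom w /\ head (cod w) l.1.2.1 = cod w.
Proof.
case: l => [[s t] fs] /andP [_ /orP [/andP [/eqP <- /eqP ->]|]]; first by left.
by case/existsP=> w /and3P [/eqP H1 /eqP H2 _]; right; exists w.
Qed.

Lemma ladG_neq_cases n l a b : ladG n l -> l.1 = (a, b) -> a <> b ->
  exists w, last (dom w) a.1 = dom w /\ head (cod w) b.1 = cod w.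
Proof.
move=> Hl E Hab; case: (ladG_cases Hl) => [El|]; last by rewrite E.
by case: Hab; move: E; rewrite El => -[<- <-].
Qed.

Lemma ladder_path n a b w : ndstr n a -> ndstr n b ->
  last (dom w) a.1 = dom w -> head (cod w) b.1 = cod w ->
  exists xa xb, [/\ a.1 = path_objs xa a.2, b.1 = path_objs xb b.2, xb = cod w &
     is_path xa (a.2 ++ w :: b.2) (last xb (map cod b.2))].
Proof.
move=> /ndstr_path [xa [Ea Ca _ _]] /ndstr_path [xb [Eb Cb _ _]].
rewrite Ea Eb /= => H1 H2; exists xa, xb; split=> //.
by apply: (is_path_cat Ca) => /=; rewrite H1 eqxx -H2 Cb.
Qed.

Lemma ladG_discrete N n l : comp_length C N -> N < n + n -> ladG n l -> l = lid l.1.1.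
Proof.
move=> HN Hn Hl; have [Hs Ht] := ladG_ndstr Hl.
case: (ladG_cases Hl) => // [[w [H1 H2]]].
have [xa [xb [_ _ _ Hc]]] := ladder_path Hs Ht H1 H2.
have := nonid_path_size_le_length C_direct HN (is_path_filter_nonid Hc) (filter_all _ _).
have /ndstr_path [? [_ _ Sa Na]] := Hs; have /ndstr_path [? [_ _ Sb Nb]] := Ht.
rewrite size_filter count_cat /=.
by move: Na Nb; rewrite !all_count => /eqP -> /eqP ->; lia.
Qed.

Lemma ladG_no_2cycle n l1 l2 a b : ladG n l1 -> l1.1 = (a, b) ->
  ladG n l2 -> l2.1 = (b, a) -> a = b.
Proof.
move=> H1 E1 H2 E2; case: (eqVneq a b) => [//|/eqP Hab].
have [w1 [A1 B1]] := ladG_neq_cases H1 E1 Hab.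
have [w2 [A2 B2]] := ladG_neq_cases H2 E2 (nesym Hab).
have [Ha Hb] := ladG_ndstr H1; rewrite E1 /= in Ha Hb.
have [xa [xb [Ea Eb Exb Hc]]] := ladder_path Ha Hb A1 B1.
have /(direct_cycle_isid C_direct) : is_path xa ((a.2 ++ w1 :: b.2) ++ [:: w2]) xa.
  rewrite Eb /= in A2; rewrite Ea /= in B2.
  by apply: (is_path_cat Hc) => /=; rewrite A2 B2 !eqxx.
rewrite -catA all_cat /= => /and3P [Ia Iw1 _].
have /ndstr_path [? [_ _ _ Na]] := Ha.
have Ea2 : a.2 = [::] by case: (a.2) Ia Na => //= u r /andP [Iu _]; rewrite /nonid Iu.
have /ndstr_path [? [_ _ Sa _]] := Ha; have /ndstr_path [? [_ _ Sb _]] := Hb.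
have Eb2 : b.2 = [::] by apply/size0nil; rewrite Sb -Sa Ea2.
rewrite Ea Ea2 /= in A1; case: Hab.
rewrite [a]surjective_pairing [b]surjective_pairing Ea Eb Ea2 Eb2 /= A1 Exb.
by rewrite (isid_dom_cod Iw1).
Qed.

Lemma ladder_subpath n a b w j : ndstr n a -> ndstr n b ->
  last (dom w) a.1 = dom w -> head (cod w) b.1 = cod w -> j <= n ->
  is_path (nth (dom w) a.1 j) (drop j a.2 ++ w :: take j b.2) (nth (dom w) b.1 j).
Proof.
move=> /ndstr_path [xa [Ea Ca Sa _]] /ndstr_path [xb [Eb Cb Sb _]] A B Hj.
rewrite Ea Eb /= in A B *.
rewrite !nth_path_objs_default ?Sa ?Sb //.
apply: (is_path_cat (is_path_drop Ca _)); rewrite ?Sa //= -A eqxx -B.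
by rewrite (is_path_take Cb) ?Sb.
Qed.

Lemma nth_sdel0 (T : Type) (d : T) i (xs : seq T) : 1 < size xs ->
  nth d (sdel i xs) 0 = nth d xs (i == 0).
Proof. by case: i => [|i] /=; rewrite /sdel ?take0 ?nth_drop //; case: xs. Qed.

(* Both faces start at x_{(i == 0)}; equal faces would close the path of
   [ladder_subpath] into a cycle containing u_1 or v_1. *)
Lemma ladG_sface_inj n l a b i : 0 < n -> ladG n l -> l.1 = (a, b) ->
  sface i a = sface i b -> a = b.
Proof.
move=> Hn Hl E [Hf _]; case: (eqVneq a b) => [//|/eqP Hab]; exfalso.
have [w [A B]] := ladG_neq_cases Hl E Hab.
have [Ha Hb] := ladG_ndstr Hl; rewrite E /= in Ha Hb.
have Hj : nat_of_bool (i == 0) <= n by case: (i == 0).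
have := ladder_subpath Ha Hb A B Hj.
have /ndstr_path [xa [Ea _ Sa Na]] := Ha; have /ndstr_path [xb [Eb _ Sb Nb]] := Hb.
have Ej : nth (dom w) a.1 (i == 0) = nth (dom w) b.1 (i == 0).
  by rewrite -!nth_sdel0 ?Hf // ?Ea ?Eb /= size_map ?Sa ?Sb.
rewrite Ej => /(direct_cycle_isid C_direct); rewrite all_cat /= => /and3P [Ia _ Ib].
case: (i == 0) Ia Ib; rewrite ?drop0 ?take0.
- case: (b.2) Sb Nb => [|v r] /=; first by move=> Sb; rewrite -Sb in Hn.
  by move=> _ /andP [Hv _] _ /andP [Iv _]; move: Hv; rewrite /nonid Iv.
- case: (a.2) Sa Na => [|u r] /=; first by move=> Sa; rewrite -Sa in Hn.
  by move=> _ /andP [Hu _] /andP [Iu _]; move: Hu; rewrite /nonid Iu.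
Qed.

End GLadders.

Section DiagonalModules.
Variables (C : FinCat) (k : fieldType).
Local Open Scope ring_scope.
Implicit Types (n : nat) (K : kind) (M : rmod C k) (a b : str C) (l : lad C).

(* The semisimple modules: sums of simples concentrated at single strings. *)
Definition diagonal K n M : Prop :=
  (forall a b l, vlad K n l -> l.1 = (a, b) -> a <> b -> mact M a b l = 0) /\
  (forall a l, vlad K n l -> l.1 = (a, a) -> mact M a a l = 1%:M).

Definition diagonal_pair K n (x : Defs.grel C k) : Prop :=
  diagonal K n x.1 /\ diagonal K n x.2.

Definition diag_rmod (d : str C -> nat) : rmod C k :=
  @RMod C k d (fun a b _ => if a == b then pid_mx (d a) else 0).

Lemma diagonal_zmod K n : diagonal K n (zmod C k).
Proof. by split=> * /=; apply/matrixP=> i []. Qed.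

Lemma isMod_zmod K n : isMod K n (zmod C k).
Proof. by split=> * /=; [apply/matrixP=> i [] | rewrite mulmx0]. Qed.

Lemma diagonal_dsum K n M1 M2 :
  diagonal K n M1 -> diagonal K n M2 -> diagonal K n (dsum M1 M2).
Proof.
move=> [A1 B1] [A2 B2]; split=> [a b l Hl E Hab|a l Hl E] /=.
  by rewrite (A1 _ _ _ Hl E Hab) (A2 _ _ _ Hl E Hab) block_mx0.
by rewrite (B1 _ _ Hl E) (B2 _ _ Hl E) -scalar_mx_block.
Qed.

Lemma diagonal_bigdsum_maps K n (I : Type) (f g : I -> rmod C k) (s1 s2 : seq I) :
  (forall i, diagonal K n (f i)) -> (forall i, diagonal K n (g i)) ->
  diagonal K n (bigdsum (map f s1 ++ map g s2)).
Proof.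
move=> Hf Hg; elim: s1 => [|i s1 IH] /=; last exact: diagonal_dsum.
by elim: s2 => [|i s2 IH] /=; [apply: diagonal_zmod | apply: diagonal_dsum].
Qed.

Lemma diagonal_vacuous N K n M : direct C -> comp_length C N -> (N < n)%N ->
  diagonal K n M.
Proof.
move=> Hd HN Hn; have Hl l : vlad K n l -> False.
  move/vlad_ladE/ladE_ndstr=> [/(ndstr_le_length Hd HN) H _].
  by move: Hn; rewrite ltnNge H.
by split=> [a b l /Hl|a l /Hl].
Qed.

Lemma diagonal_discrete N n M : direct C -> comp_length C N -> (N < n + n)%N ->
  isMod KG n M -> diagonal KG n M.
Proof.
move=> Hd HN Hn [HM _]; split=> [a b l Hl E Hab|a l Hl E].
  by case: Hab; move: E; rewrite (ladG_discrete Hd HN Hn Hl) => -[<- <-].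
have [Ha _] := ladG_ndstr Hl; rewrite E in Ha.
by rewrite (ladG_discrete Hd HN Hn Hl) E; apply: HM.
Qed.

Lemma isMod_diag_rmod n (d : str C -> nat) : direct C -> isMod KG n (diag_rmod d).
Proof.
move=> Hd; split=> [a _|a b c l1 l2 H1 H2 E1 E2] /=; first by rewrite eqxx pid_mx_1.
case: (eqVneq a b) => [<-|Hab].
  by case: (eqVneq a c) => [<-|_]; rewrite ?pid_mx_1 ?mul1mx ?mulmx0.
rewrite mul0mx; case: (eqVneq a c) => // Eac; subst c.
by case/eqP: Hab; exact: (ladG_no_2cycle Hd H1 E1 H2 E2).
Qed.

Lemma diagonal_pb n i (d : str C -> nat) : direct C ->
  diagonal KG n.+1 (pb i (diag_rmod d)).
Proof.
move=> Hd; split=> [a b l Hl E Hab|a l Hl E] /=; last by rewrite eqxx pid_mx_1.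
by case: eqP => // /(ladG_sface_inj Hd (ltn0Sn n) Hl E).
Qed.

Lemma diagonal_dGr n (d1 d2 : str C -> nat) : direct C ->
  diagonal_pair KG n.+1 (dGr n (diag_rmod d1, diag_rmod d2)).
Proof.
by move=> Hd; split; apply: diagonal_bigdsum_maps => i; apply: diagonal_pb.
Qed.

Lemma diagonal_modIso K n M1 M2 : diagonal K n M1 -> diagonal K n M2 ->
  (forall a, ndstr n a -> mdim M1 a = mdim M2 a) -> modIso K n M1 M2.
Proof.
move=> [A1 B1] [A2 B2] Hdim.
exists (fun a => pid_mx (mdim M1 a)), (fun a => pid_mx (mdim M1 a)); split.
  by move=> a /Hdim E; rewrite !pid_mx_id ?E // pid_mx_1; split=> //; rewrite E pid_mx_1.
move=> a b l Hl E; case: (eqVneq a b) => [Eab|/eqP Hab].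
  by subst b; rewrite (B1 _ _ Hl E) (B2 _ _ Hl E) mul1mx mulmx1.
by rewrite (A1 _ _ _ Hl E Hab) (A2 _ _ _ Hl E Hab) mul0mx mulmx0.
Qed.

Lemma diagonal_grEq K n (x y : Defs.grel C k) :
  diagonal_pair K n x -> diagonal_pair K n y -> cEq n (chi x) (chi y) ->
  grEq K n x y.
Proof.
move=> [X1 X2] [Y1 Y2] Hchi; exists (zmod C k); split; first exact: isMod_zmod.
have Z := diagonal_zmod K n.
apply: diagonal_modIso; [exact: diagonal_dsum (diagonal_dsum X1 Y2) Z|
                         exact: diagonal_dsum (diagonal_dsum Y1 X2) Z|].
by move=> a /Hchi; rewrite /chi /=; lia.
Qed.

End DiagonalModules.

Section Realisation.
Variables (C : FinCat) (k : fieldType).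
Local Open Scope ring_scope.

Definition zpos (z : int) : nat := if z is Posz m then m else 0.
Definition zneg (z : int) : nat := if z is Negz m then m.+1 else 0.

Lemma zposB_zneg (z : int) : z = (zpos z)%:Z - (zneg z)%:Z.
Proof. by case: z => m /=; rewrite ?subr0 // NegzE sub0r. Qed.

Definition diag_pair m (psi : cochain C) : Defs.grel C k :=
  (diag_rmod k (fun s => if ndstr m s then zpos (psi s) else 0%N),
   diag_rmod k (fun s => if ndstr m s then zneg (psi s) else 0%N)).

Lemma chi_diag_pair m psi : cEq m (chi (diag_pair m psi)) psi.
Proof. by move=> s Hs; rewrite /chi /= Hs -zposB_zneg. Qed.

Lemma grValid_diag_pair m psi : direct C -> grValid KG m (diag_pair m psi).
Proof. by move=> Hd; split; apply: isMod_diag_rmod. Qed.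

Lemma mdim_bigdsum (Ms : seq (rmod C k)) a :
  mdim (bigdsum Ms) a = (\sum_(M <- Ms) mdim M a)%N.
Proof. by elim: Ms => [|M Ms IH] /=; rewrite ?big_nil ?big_cons ?IH. Qed.

Lemma sum_alternate (g : nat -> int) m :
  \sum_(i < m) (-1) ^+ i * g i =
  \sum_(i <- iota 0 m | ~~ odd i) g i - \sum_(i <- iota 0 m | odd i) g i.
Proof.
rewrite -(big_mkord xpredT (fun i => (-1) ^+ i * g i)) /index_iota subn0.
rewrite (bigID odd) /= addrC; congr (_ + _).
  by apply: eq_bigr => i /negbTE Hi; rewrite -signr_odd Hi mul1r.
by rewrite -sumrN; apply: eq_bigr => i Hi; rewrite -signr_odd Hi mulN1r.
Qed.

Lemma chi_dGr_diag_pair m psi : cEq m.+1 (chi (dGr m (diag_pair m psi))) (cdelta m psi).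
Proof.
move=> a _; rewrite /cdelta (sum_alternate (fun i =>
  if ndstr m (sface i a) then psi (sface i a) else 0)).
rewrite /chi /dGr /diag_pair; cbn [fst snd].
rewrite !mdim_bigdsum !big_cat !big_map !big_filter; cbn [mdim pb diag_rmod].
rewrite !PoszD !(big_morph Posz PoszD (erefl 0%:Z)).
have E i : (if ndstr m (sface i a) then psi (sface i a) else 0) =
   (if ndstr m (sface i a) then zpos (psi (sface i a)) else 0%N)%:Z -
   (if ndstr m (sface i a) then zneg (psi (sface i a)) else 0%N)%:Z.
  by case: ifP => _; [apply: zposB_zneg | rewrite subr0].
under [X in _ = X - _]eq_bigr do rewrite E.
under [X in _ = _ - X]eq_bigr do rewrite E.
rewrite !sumrB.
(* [big_morph] leaves sums that differ from the right-hand ones only in the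
   monoid instance; naming them makes lia see the same atoms. *)
set A := \sum_(i <- _ | _) _; set B := \sum_(i <- _ | _) _.
set D := \sum_(i <- _ | _) _; set F := \sum_(i <- _ | _) _.
lia.
Qed.

Lemma cdelta0 m : cEq m.+1 (cdelta m (fun _ : str C => 0)) (fun _ => 0).
Proof. by move=> s _; rewrite /cdelta big1 // => i _; case: ifP; rewrite mulr0. Qed.

End Realisation.

Section CompositionLength.
Variables (k : fieldType) (C : FinCat) (N : nat).
Hypotheses (C_direct : direct C) (C_length : comp_length C N).

Lemma grVanish_gt_length K n : (N < n)%N -> grVanish C k K n.
Proof.
case: n => [|n] // Hn x _ _; exists (gr0 C k).
split; first by split; apply: isMod_zmod.
apply: diagonal_grEq; try by split; apply: diagonal_vacuous C_direct C_length Hn.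
by move=> a /(ndstr_le_length C_direct C_length); rewrite leqNgt Hn.
Qed.

Lemma chiEpi_pos n : (0 < n)%N -> chiEpi C k n.
Proof.
move=> Hn phi Hphi; exists (diag_pair k n phi).
split; [exact: grValid_diag_pair | split].
  apply: diagonal_grEq; first exact: diagonal_dGr.
    by split; apply: diagonal_zmod.
  by move=> a Ha; rewrite (chi_dGr_diag_pair k phi Ha) (Hphi a Ha) /chi /= subrr.
case: n Hn {Hphi} => [|n] // _; exists (fun _ => 0) => s Hs.
by rewrite cdelta0 // chi_diag_pair // subrr.
Qed.

Lemma chiMono_discrete n : (N < n + n)%N -> chiMono C k n.
Proof.
case: n => [|n] Hn // x [Hx1 Hx2] _ [psi Hpsi].
exists (diag_pair k n psi); split; first exact: grValid_diag_pair.
apply: diagonal_grEq; first exact: diagonal_dGr.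
  by split; apply: diagonal_discrete C_direct C_length Hn _.
by move=> a Ha; rewrite (chi_dGr_diag_pair k psi Ha) Hpsi.
Qed.

End CompositionLength.

Theorem proposition4p10 (k : fieldType) (C : FinCat) (N : nat) :
  direct C -> comp_length C N -> (1 <= N)%N ->
  (forall n, (N < n)%N -> grVanish C k KE n /\ grVanish C k KG n) /\
  (forall n, (N./2.+1 <= n)%N -> chiEpi C k n /\ chiMono C k n) /\
  (forall n, (1 <= n <= N./2)%N -> chiEpi C k n).
Proof.
move=> Hd HN _; split; [|split].
- by move=> n Hn; split; exact (grVanish_gt_length Hd HN Hn).
- move=> n Hn; split; first exact (chiEpi_pos k Hd (leq_trans (ltn0Sn _) Hn)).
  refine (chiMono_discrete Hd HN _).
  by move: Hn; rewrite -[in _ < _](odd_double_half N) -addnn; case: odd => /=; lia.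
- by move=> n /andP [Hn _]; exact (chiEpi_pos k Hd Hn).
Qed.
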